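(* Let $n\ge 1$ and let $Q$ be a quiver (with arbitrary orientation of its arrows) whose underlying graph is a Dynkin graph of type $A_r$, $D_r$, $E_6$, $E_7$ or $E_8$, so that $Q$ has $r$ vertices and $r-1$ arrows. Let $\beta=(n,\dots,n)$. Then the ring of $\mathbb{U}_\beta$-invariant polynomial functions on $F^{\bullet}Rep(Q,\beta)\cong\mathfrak{b}_n^{\oplus (r-1)}$ is $$\mathbb{C}[F^{\bullet}Rep(Q,\beta)]^{\mathbb{U}_\beta}=\mathbb{C}[\mathfrak{t}_n^{\oplus (r-1)}],$$ i.e. it is the subalgebra generated by the diagonal entries $(A_a)_{kk}$, $1\le k\le n$, $a\in Q_1$ (a polynomial ring in $n(r-1)$ variables).
   Context: For a quiver $Q=(Q_0,Q_1)$ with head and tail maps $h,t:Q_1\to Q_0$ and dimension vector $\beta=(n,\dots,n)$, put the vector space $\mathbb{C}^n$ at each vertex with the complete standard flag $0\subset\mathbb{C}^1\subset\cdots\subset\mathbb{C}^n$ ($\mathbb{C}^k$ spanned by the first $k$ standard basis vectors). The filtered quiver variety $F^{\bullet}Rep(Q,\beta)$ is the space of tuples $(A_a)_{a\in Q_1}$ of $n\times n$ matrices with $A_a(\mathbb{C}^k)\subseteq\mathbb{C}^k$ for all $k$, i.e. $F^{\bullet}Rep(Q,\beta)=\mathfrak{b}_n^{\oplus Q_1}$ where $\mathfrak{b}_n$ is the space of upper triangular $n\times n$ complex matrices. Let $U\subset GL_n(\mathbb{C})$ be the group of upper triangular unipotent matrices and $\mathbb{U}_\beta=U^{Q_0}$,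 acting by $(u_i)_{i\in Q_0}\cdot(A_a)_{a}=(u_{h(a)}A_au_{t(a)}^{-1})_a$; it acts on polynomial functions by $(u\cdot f)(A)=f(u^{-1}\cdot A)$. $\mathfrak{t}_n$ denotes the diagonal $n\times n$ matrices, and $\mathbb{C}[\mathfrak{t}_n^{\oplus Q_1}]$ denotes the subalgebra of $\mathbb{C}[\mathfrak{b}_n^{\oplus Q_1}]$ generated by the diagonal entries of the $A_a$. *)

From mathcomp Require Import all_boot all_algebra all_fingroup.
From mathcomp Require Import mpoly.
From mathcomp.real_closed Require Import complex.
From mathcomp Require Import Rstruct.

Set Implicit Arguments.
Unset Strict Implicit.
Unset Printing Implicit Defensive.
Import GRing.Theory.
Local Open Scope ring_scope.

Definition CC : closedFieldType := (Rdefinitions.R)[i].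

Definition path_edge (r m : nat) (i j : 'I_r) : bool :=
  ((j == i.+1 :> nat) || (i == j.+1 :> nat)) && (maxn i j < m)%N.

Definition single_edge (r p q : nat) (i j : 'I_r) : bool :=
  ((i == p :> nat) && (j == q :> nat)) || ((i == q :> nat) && (j == p :> nat)).

Inductive dynkin_type := TypeA | TypeD | TypeE.

(* A_r : path 0 - 1 - ... - (r-1),                         r >= 1
   D_r : path 0 - ... - (r-2), plus edge (r-3) - (r-1),    r >= 4
   E_r : path 0 - ... - (r-2), plus edge 2 - (r-1),        r = 6,7,8 *)
Definition dynkin_adj (X : dynkin_type) (r : nat) (i j : 'I_r) : bool :=
  match X with
  | TypeA => @path_edge r r i j
  | TypeD => @path_edge r r.-1 i j || @single_edge r (r - 3) r.-1 i j
  | TypeE => @path_edge r r.-1 i j || @single_edge r 2 r.-1 i j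
  end.

Definition dynkin_rank_ok (X : dynkin_type) (r : nat) : bool :=
  match X with
  | TypeA => (1 <= r)%N
  | TypeD => (4 <= r)%N
  | TypeE => (r \in [:: 6; 7; 8])%N
  end.

(* A quiver with vertex set 'I_r, arrow set Q1, tail/head maps t, h.
   Its underlying (multi)graph is the Dynkin graph of type X_r: there is a
   relabelling sigma of the vertices such that every arrow becomes an edge of
   the Dynkin graph, distinct arrows give distinct edges, and every edge of the
   Dynkin graph comes from an arrow. *)
Definition underlying_dynkin (r : nat) (Q1 : finType) (t h : Q1 -> 'I_r)
    (X : dynkin_type) : Prop :=
  dynkin_rank_ok X r /\
  exists sigma : {perm 'I_r},
    [/\ forall a, dynkin_adj X (sigma (t a)) (sigma (h a)),
        forall a b, ((t a == t b) && (h a == h b)) || ((t a == h b) && (h a == t b))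
                    -> a = b
      & forall i j, dynkin_adj X i j ->
          exists a, ((sigma (t a) == i) && (sigma (h a) == j))
                 || ((sigma (t a) == j) && (sigma (h a) == i))].

Definition upper_tri (n : nat) (M : 'M[CC]_n) : Prop :=
  forall i j : 'I_n, (j < i)%N -> M i j = 0.

Definition unipotent_upper (n : nat) (M : 'M[CC]_n) : Prop :=
  upper_tri M /\ forall i : 'I_n, M i i = 1.

(* Coordinates of b_n^{Q1}: triples (a, i, j) with i <= j. *)
Definition bcoord (Q1 : finType) (n : nat) : finType :=
  {x : Q1 * 'I_n * 'I_n | (x.1.2 <= x.2)%N}.

Definition nb (Q1 : finType) (n : nat) : nat := #|{: bcoord Q1 n}|.

Definition polyB (Q1 : finType) (n : nat) := {mpoly CC[nb Q1 n]}.

Definition coords (Q1 : finType) (n : nat) (A : Q1 -> 'M[CC]_n)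
    (k : 'I_(nb Q1 n)) : CC :=
  let x := val (enum_val k) in A x.1.1 x.1.2 x.2.

Definition eval_at (Q1 : finType) (n : nat) (f : polyB Q1 n)
    (A : Q1 -> 'M[CC]_n) : CC := f.@[coords A].

Definition uact (r : nat) (Q1 : finType) (t h : Q1 -> 'I_r) (n : nat)
    (u : 'I_r -> 'M[CC]_n) (A : Q1 -> 'M[CC]_n) : Q1 -> 'M[CC]_n :=
  fun a => u (h a) *m A a *m invmx (u (t a)).

(* U_beta-invariance of f: (u . f)(A) = f(u^{-1} . A) = f(A) for all u, A. *)
Definition U_invariant (r : nat) (Q1 : finType) (t h : Q1 -> 'I_r) (n : nat)
    (f : polyB Q1 n) : Prop :=
  forall (u : 'I_r -> 'M[CC]_n), (forall i, unipotent_upper (u i)) ->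
  forall (A : Q1 -> 'M[CC]_n), (forall a, upper_tri (A a)) ->
    eval_at f (uact t h (fun i => invmx (u i)) A) = eval_at f A.

Definition diag_coord (Q1 : finType) (n : nat) (x : Q1 * 'I_n) : bcoord Q1 n :=
  @exist _ (fun y : Q1 * 'I_n * 'I_n => (y.1.2 <= y.2)%N) (x.1, x.2, x.2) (leqnn x.2).

Definition nd (Q1 : finType) (n : nat) : nat := #|{: Q1 * 'I_n}|.

Definition diag_vars (Q1 : finType) (n : nat) : (nd Q1 n).-tuple (polyB Q1 n) :=
  [tuple 'X_(enum_rank (diag_coord (enum_val k))) | k < nd Q1 n].

(* C[t_n^{Q1}] : the subalgebra of polyB generated by the diagonal entries,
   i.e. the image of polynomials in the diagonal variables. *)
Definition in_diag_subalg (Q1 : finType) (n : nat) (f : polyB Q1 n) : Prop :=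
  exists g : {mpoly CC[nd Q1 n]}, f = comp_mpoly (diag_vars Q1 n) g.

(* The underlying graph of a Dynkin quiver is a tree, so its vertices can be
   labelled so that every arrow joins a new vertex to one with a smaller label.
   When every [A_a] has nonzero diagonal, the unipotent [u_i] can then be chosen
   vertex by vertex so that [u . A] is the diagonal part of [A]. Hence an
   invariant [f] satisfies [f A = f (diag A)] for such [A], and then for all [A]:
   along the line [A + s 1] the difference is a polynomial in [s] vanishing for
   all but finitely many [s]. So [f] is a polynomial in the diagonal entries;
   conversely these are invariant, unipotent matrices having unit diagonal. *)

From mathcomp Require Import all_boot all_algebra all_fingroup.
From mathcomp Require Import mpoly.
From mathcomp.real_closed Require Import complex.
From mathcomp Require Import Rstruct.
From mathcomp Require Import zify.

Set Implicit Arguments.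
Unset Strict Implicit.
Unset Printing Implicit Defensive.
Import GRing.Theory Num.Theory.
Local Open Scope ring_scope.

Section UpperTriangular.
Variable n : nat.
Implicit Types M N U : 'M[CC]_n.

Lemma upper_tri_mul M N : upper_tri M -> upper_tri N -> upper_tri (M *m N).
Proof.
move=> uM uN i j lt_ji; rewrite mxE big1 // => k _.
case: (ltnP k i) => [lt_ki|le_ik]; first by rewrite uM // mul0r.
by rewrite uN ?mulr0 // (leq_trans lt_ji le_ik).
Qed.

Lemma upper_tri_mul_diag M N i :
  upper_tri M -> upper_tri N -> (M *m N) i i = M i i * N i i.
Proof.
move=> uM uN; rewrite mxE (bigD1 i) //= big1 ?addr0 // => k neq_ki.
case: (ltnP k i) => [lt_ki|le_ik]; first by rewrite uM // mul0r.
by rewrite uN ?mulr0 // ltn_neqAle le_ik andbT eq_sym.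
Qed.

Lemma upper_tri_add_scalar M s : upper_tri M -> upper_tri (M + s%:M).
Proof.
by move=> uM i j lt_ji; rewrite !mxE uM // -val_eqE gtn_eqF //= mulr0n addr0.
Qed.

Lemma upper_tri_unitmx M : upper_tri M -> (forall i, M i i != 0) -> M \in unitmx.
Proof.
move=> uM dM; rewrite unitmxE -det_tr det_trig.
  by rewrite unitfE; apply/prodf_neq0 => i _; rewrite mxE.
by apply/is_trig_mxP => i j lt_ij; rewrite mxE uM.
Qed.

Section Inverse.
Variable M : 'M[CC]_n.
Hypotheses (uM : upper_tri M) (dM : forall i, M i i != 0).

Lemma upper_tri_invmx : upper_tri (invmx M).
Proof.
have VMM : invmx M *m M = 1%:M by rewrite mulVmx // upper_tri_unitmx.
move=> i j; have [m] := ubnP j; elim: m i j => // m IHm i j lt_jm lt_ji.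
have := congr1 (fun B : 'M[CC]_n => B i j) VMM.
rewrite !mxE -val_eqE (gtn_eqF lt_ji) (bigD1 j) //= big1 ?addr0
  => [/eqP|k neq_kj].
  by rewrite mulf_eq0 (negbTE (dM j)) orbF => /eqP.
case: (ltnP j k) => [lt_jk|le_kj]; first by rewrite uM ?mulr0.
have lt_kj : (k < j)%N by rewrite ltn_neqAle le_kj andbT.
by rewrite IHm ?mul0r ?(ltn_trans lt_kj lt_ji) ?(leq_trans lt_kj).
Qed.

Lemma invmx_upper_tri_diag i : invmx M i i = (M i i)^-1.
Proof.
have VMM : invmx M *m M = 1%:M by rewrite mulVmx // upper_tri_unitmx.
have /= := congr1 (fun B : 'M[CC]_n => B i i) VMM.
rewrite (upper_tri_mul_diag i upper_tri_invmx uM) mxE eqxx => VMii.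
by apply: (mulIf (dM i)); rewrite VMii mulVf.
Qed.

End Inverse.

Definition diag_part M : 'M[CC]_n := \matrix_(i, j) (M i j *+ (i == j)).

Lemma diag_part_upper M : upper_tri (diag_part M).
Proof. by move=> i j lt_ji; rewrite mxE -val_eqE gtn_eqF. Qed.

Lemma diag_part_diag M i : diag_part M i i = M i i.
Proof. by rewrite mxE eqxx. Qed.

Lemma diag_part_add_scalar M s : diag_part (M + s%:M) = diag_part M + s%:M.
Proof. by apply/matrixP => i j; rewrite !mxE; case: (i == j); rewrite ?addr0. Qed.

Lemma unipotent_unitmx U : unipotent_upper U -> U \in unitmx.
Proof. by case=> uU dU; apply: upper_tri_unitmx => // i; rewrite dU oner_eq0. Qed.

Lemma unipotent_invmx U : unipotent_upper U -> unipotent_upper (invmx U).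
Proof.
case=> uU dU; have dU0 i : U i i != 0 by rewrite dU oner_eq0.
split=> [|i]; first exact: upper_tri_invmx.
by rewrite invmx_upper_tri_diag // dU invr1.
Qed.

Lemma unipotent1 : unipotent_upper (1%:M : 'M[CC]_n).
Proof. by split=> [i j lt_ji|i]; rewrite mxE ?eqxx -?val_eqE ?gtn_eqF. Qed.

Lemma unipotent_tail_solution U M : unipotent_upper U ->
  upper_tri M -> (forall i, M i i != 0) ->
  unipotent_upper (invmx M *m U *m diag_part M).
Proof.
case=> uU dU uM dM; have uMi := upper_tri_invmx uM dM.
have uMiU := upper_tri_mul uMi uU.
split=> [|i]; first exact: upper_tri_mul uMiU (diag_part_upper M).
rewrite (upper_tri_mul_diag i uMiU (diag_part_upper M)).
rewrite (upper_tri_mul_diag i uMi uU) invmx_upper_tri_diag //.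
by rewrite dU mulr1 diag_part_diag mulVf.
Qed.

Lemma unipotent_head_solution U M : unipotent_upper U ->
  upper_tri M -> (forall i, M i i != 0) ->
  unipotent_upper (M *m U *m invmx (diag_part M)).
Proof.
case=> uU dU uM dM; have dD i : diag_part M i i != 0 by rewrite diag_part_diag.
have uDi := upper_tri_invmx (diag_part_upper M) dD.
have uMU := upper_tri_mul uM uU.
split=> [|i]; first exact: upper_tri_mul uMU uDi.
rewrite (upper_tri_mul_diag i uMU uDi) (upper_tri_mul_diag i uM uU).
rewrite (invmx_upper_tri_diag (diag_part_upper M) dD).
by rewrite dU mulr1 diag_part_diag mulfV.
Qed.

End UpperTriangular.

Lemma poly_eq0_of_horner0 (R : numDomainType) (q : {poly R}) :
  (forall s, q.[s] = 0) -> q = 0.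
Proof.
move=> q0; apply: (@roots_geq_poly_eq0 _ q [seq i%:R | i <- iota 0 (size q)]).
- by apply/allP => x _; apply/rootP.
- by rewrite map_inj_uniq ?iota_uniq // => i j /eqP; rewrite eqr_nat => /eqP.
- by rewrite size_map size_iota.
Qed.

Lemma poly_eq0_of_cofinite_roots (R : numDomainType) (q : {poly R})
    (bad : seq R) :
  (forall s, s \notin bad -> q.[s] = 0) -> q = 0.
Proof.
move=> q0; pose B := \prod_(b <- bad) ('X - b%:P).
have /eqP : q * B = 0.
  apply: poly_eq0_of_horner0 => s; rewrite hornerM horner_prod.
  have [bad_s|/q0->] := boolP (s \in bad); last by rewrite mul0r.
  by rewrite (big_rem s) //= hornerXsubC subrr mul0r mulr0.
by rewrite mulf_eq0 (negbTE (monic_neq0 (monic_prod_XsubC _ _ _))) orbF => /eqP.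
Qed.

Section LastVariable.
Variables (R : comNzRingType) (N : nat).

Definition ext_last (w : 'I_N -> R) (s : R) (i : 'I_N.+1) : R :=
  if insub (val i) is Some j then w j else s.

Lemma ext_last_widen w s (i : 'I_N) : ext_last w s (widen_ord (leqnSn N) i) = w i.
Proof. by rewrite /ext_last /= insubT // => lt_iN; congr w; apply: val_inj. Qed.

Lemma ext_last_max w s : ext_last w s ord_max = s.
Proof. by rewrite /ext_last insubF //= ltnn. Qed.

Lemma meval_muni (p : {mpoly R[N.+1]}) w s :
  (map_poly (meval w) (muni p)).[s] = p.@[ext_last w s].
Proof.
rewrite muniE mevalE rmorph_sum /= horner_sum; apply: eq_bigr => m _.
rewrite -!mul_polyC rmorphM /= map_polyC map_polyXn hornerM hornerC hornerXn.
rewrite -[X in X * _]/(meval w _) mevalZ mevalX big_ord_recr /=.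
rewrite ext_last_max mulrA.
by congr (_ * _ * _); apply: eq_bigr => i _; rewrite mnmE ext_last_widen.
Qed.

Lemma mcoeff_muni (p : {mpoly R[N.+1]}) (m : 'X_{1..N.+1}) :
  ((muni p)`_(m ord_max))@_[multinom m (widen_ord (leqnSn N) i) | i < N] = p@_m.
Proof.
have split_mnm (m' : 'X_{1..N.+1}) :
    ([multinom m' (widen_ord (leqnSn N) i) | i < N] ==
     [multinom m (widen_ord (leqnSn N) i) | i < N]) && (m ord_max == m' ord_max)
    = (m' == m).
  apply/idP/eqP => [/andP[/eqP eq_init /eqP eq_last]|->]; last by rewrite !eqxx.
  apply/mnmP => i; case: (unliftP ord_max i) => [j ->|->] //.
  have := congr1 (fun mm : 'X_{1..N} => mm j) eq_init; rewrite !mnmE.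
  have -> // : lift ord_max j = widen_ord (leqnSn N) j.
  by apply/val_inj; rewrite /= /bump leqNgt ltn_ord.
rewrite muniE coef_sum (big_morph (mcoeff _) (mcoeffD _) (mcoeff0 _ _)).
rewrite [p in RHS]mpolyE (big_morph (mcoeff _) (mcoeffD _) (mcoeff0 _ _)).
apply: eq_bigr => m' _; rewrite coefZ coefXn mulr_natr mcoeffMn !mcoeffZ !mcoeffX.
rewrite -split_mnm.
by case: (_ == _); case: (_ == _); rewrite ?mulr0n ?mulr1n ?mulr0.
Qed.

Lemma muni_eq0 (p : {mpoly R[N.+1]}) : (muni p == 0) = (p == 0).
Proof.
apply/eqP/eqP => [p0|->]; last exact: muni0.
by apply/mpolyP => m; rewrite -mcoeff_muni p0 coef0 !mcoeff0.
Qed.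

End LastVariable.

Lemma mpoly_eq0_of_meval0 (R : numDomainType) N (p : {mpoly R[N]}) :
  (forall v, p.@[v] = 0) -> p = 0.
Proof.
elim: N p => [|N IHN] p p0.
  have mnm0 (m : 'X_{1..0}) : m = 0%MM by apply/mnmP => -[].
  apply/mpolyP => m; rewrite mcoeff0 (mnm0 m) -[RHS](p0 (fun _ => 0)) mevalE.
  rewrite [p in LHS]mpolyE (big_morph (mcoeff _) (mcoeffD _) (mcoeff0 _ _)).
  by apply: eq_bigr => m' _; rewrite mcoeffZ mcoeffX (mnm0 m') eqxx big_ord0.
apply/eqP; rewrite -muni_eq0; apply/eqP/polyP => k; rewrite coef0.
apply: IHN => w; have /polyP/(_ k) : map_poly (meval w) (muni p) = 0.
  by apply: poly_eq0_of_horner0 => s; rewrite meval_muni p0.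
by rewrite coef_map coef0.
Qed.

Section Diagonalization.
Variables (n r : nat) (Q1 : finType) (t h : Q1 -> 'I_r) (lab : 'I_r -> nat).

Definition arrow_top a := maxn (lab (t a)) (lab (h a)).

(* Each arrow is determined by its higher end, so ordering the vertices by
   [lab] makes every arrow introduce a fresh vertex: the quiver is a forest. *)
Hypothesis arrow_lab_neq : forall a, lab (t a) != lab (h a).
Hypothesis arrow_top_inj : injective arrow_top.

Variable A : Q1 -> 'M[CC]_n.
Hypothesis uA : forall a, upper_tri (A a).
Hypothesis dA : forall a i, A a i i != 0.

Definition twist (u : 'I_r -> 'M[CC]_n) a := invmx (u (h a)) *m A a *m u (t a).

Lemma twist_fresh_vertex k (u : 'I_r -> 'M[CC]_n) a :
  (forall i, unipotent_upper (u i)) -> arrow_top a = k ->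
  exists v M, [/\ lab v = k, unipotent_upper M
                & twist [eta u with v |-> M] a = diag_part (A a)].
Proof.
move=> uu top_a; have dD i : diag_part (A a) i i != 0 by rewrite diag_part_diag.
have uD := upper_tri_unitmx (diag_part_upper (A a)) dD.
have uAa := upper_tri_unitmx (uA a) (dA a).
case: (ltngtP (lab (t a)) (lab (h a))) => [lt_th|lt_ht|eq_th]; last first.
- by have := arrow_lab_neq a; rewrite eq_th eqxx.
- exists (t a), (invmx (A a) *m u (h a) *m diag_part (A a)); split.
  + by rewrite -top_a /arrow_top (maxn_idPl (ltnW lt_ht)).
  + exact: unipotent_tail_solution.
  + rewrite /twist /= eqxx ifN; last by apply: contraTneq lt_ht => ->; rewrite ltnn.
    by rewrite -!mulmxA mulKVmx // mulKmx // unipotent_unitmx.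
- pose M := A a *m u (t a) *m invmx (diag_part (A a)).
  have uM : unipotent_upper M by apply: unipotent_head_solution.
  exists (h a), M; split=> //.
  + by rewrite -top_a /arrow_top (maxn_idPr (ltnW lt_th)).
  + rewrite /twist /= eqxx ifN; last by apply: contraTneq lt_th => ->; rewrite ltnn.
    have AuM : A a *m u (t a) = M *m diag_part (A a) by rewrite mulmxKV.
    by rewrite -mulmxA AuM mulKmx // unipotent_unitmx.
Qed.

Lemma twist_diag_below k : exists u : 'I_r -> 'M[CC]_n,
  (forall i, unipotent_upper (u i)) /\
  forall a, (arrow_top a < k)%N -> twist u a = diag_part (A a).
Proof.
elim: k => [|k [u [uu IHu]]].
  by exists (fun=> 1%:M); split=> // i; apply: unipotent1.
have [a /eqP top_a|no_top] := pickP (fun a => arrow_top a == k); last first.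
  exists u; split=> // b; rewrite ltnS leq_eqVlt.
  case/predU1P=> [top_b|]; last exact: IHu.
  by have := no_top b; rewrite top_b eqxx.
have [v [M [lab_v uM twist_a]]] := twist_fresh_vertex uu top_a.
exists [eta u with v |-> M]; split=> [i|b]; first by rewrite /=; case: eqP.
have [-> //|neq_ba lt_b] := eqVneq b a.
have {}lt_b : (arrow_top b < k)%N.
  rewrite ltn_neqAle -ltnS lt_b andbT -top_a.
  by apply: contra neq_ba => /eqP/arrow_top_inj ->.
have fresh x : (lab x < k)%N -> x == v = false.
  by move=> lt_x; apply: contraTF lt_x => /eqP->; rewrite lab_v ltnn.
move: (lt_b); rewrite gtn_max => /andP[lt_tb lt_hb].
by rewrite /twist /= !fresh //; apply: IHu.
Qed.

Lemma unipotent_diagonalization : exists u : 'I_r -> 'M[CC]_n,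
  (forall i, unipotent_upper (u i)) /\
  forall a, uact t h (fun i => invmx (u i)) A a = diag_part (A a).
Proof.
have [u [uu twist_u]] := twist_diag_below (\max_a arrow_top a).+1.
exists u; split=> // a; rewrite /uact invmxK; apply: twist_u.
by rewrite ltnS (leq_bigmax a).
Qed.

End Diagonalization.

Section Line.
Variables (R : comNzRingType) (N : nat).

Definition mline (p : {mpoly R[N]}) (w d : 'I_N -> R) : {poly R} :=
  mmap polyC (fun k => (w k)%:P + d k *: 'X) p.

Lemma horner_mline p w d s : (mline p w d).[s] = p.@[fun k => w k + d k * s].
Proof.
rewrite /mline (mmapE _ (leqnn (msize p))) /meval (mmapE _ (leqnn (msize p))).
rewrite horner_sum; apply: eq_bigr => m _; rewrite hornerM hornerC horner_prod.
congr (_ * _); apply: eq_bigr => i _.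
by rewrite horner_exp hornerD hornerC hornerZ hornerX.
Qed.

End Line.

Section Coordinates.
Variables (n : nat) (Q1 : finType).
Implicit Types (A : Q1 -> 'M[CC]_n) (f : polyB Q1 n).

Definition on_diag (k : 'I_(nb Q1 n)) : bool :=
  let x := val (enum_val k) in x.1.2 == x.2.

Lemma coords_diag_part A k :
  coords (fun a => diag_part (A a)) k = coords A k *+ on_diag k.
Proof. by rewrite /coords mxE. Qed.

Lemma eval_at_add_scalar f A s :
  eval_at f (fun a => A a + s%:M) =
  (mline f (coords A) (fun k => (on_diag k)%:R)).[s].
Proof.
rewrite /eval_at horner_mline; apply: meval_eq => k.
by rewrite /coords !mxE mulr_natl.
Qed.

Lemma eval_at_diag_part_of_generic f :
  (forall A, (forall a, upper_tri (A a)) -> (forall a i, A a i i != 0) ->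
     eval_at f A = eval_at f (fun a => diag_part (A a))) ->
  forall A, (forall a, upper_tri (A a)) ->
     eval_at f A = eval_at f (fun a => diag_part (A a)).
Proof.
move=> f_generic A uA; pose d k : CC := (on_diag k)%:R.
pose q := mline f (coords A) d - mline f (coords (fun a => diag_part (A a))) d.
have /eqP : q = 0.
  apply: (@poly_eq0_of_cofinite_roots _ _ [seq - A x.1 x.2 x.2 | x : Q1 * 'I_n]).
  move=> s bad_s; rewrite hornerD hornerN -!eval_at_add_scalar.
  rewrite f_generic => [|a|a i].
  - apply/eqP; rewrite subr_eq0 /eval_at; apply/eqP/meval_eq => k.
    by rewrite /coords diag_part_add_scalar.
  - exact: upper_tri_add_scalar.
  rewrite !mxE eqxx mulr1n addrC addr_eq0; apply: contra bad_s => /eqP->.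
  exact: (map_f _ (mem_enum _ (a, i))).
rewrite subr_eq0 => /eqP/(congr1 (horner^~ 0)); rewrite /= !horner_mline /eval_at.
under meval_eq do rewrite mulr0 addr0.
by under [RHS]meval_eq do rewrite mulr0 addr0.
Qed.

End Coordinates.

Section DiagonalSubalgebra.
Variables (n : nat) (Q1 : finType).

Definition mx_of_coords (v : 'I_(nb Q1 n) -> CC) (a : Q1) : 'M[CC]_n :=
  \matrix_(i, j) if insub (a, i, j) : option (bcoord Q1 n) is Some y
                 then v (enum_rank y) else 0.

Lemma coords_mx_of_coords v : coords (mx_of_coords v) =1 v.
Proof. by move=> k; rewrite /coords mxE -!surjective_pairing valK enum_valK. Qed.

Lemma mx_of_coords_upper v a : upper_tri (mx_of_coords v a).
Proof. by move=> i j lt_ji; rewrite mxE insubF //= leqNgt lt_ji. Qed.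

Definition diag_proj : (nb Q1 n).-tuple {mpoly CC[nd Q1 n]} :=
  [tuple if on_diag k then 'X_(enum_rank (val (enum_val k)).1) else 0
   | k < nb Q1 n].

Lemma meval_diag_vars_proj (g : polyB Q1 n) v :
  (comp_mpoly (diag_vars Q1 n) (comp_mpoly diag_proj g)).@[v] =
  g.@[fun k => v k *+ on_diag k].
Proof.
rewrite !comp_mpoly_meval; apply: meval_eq => k; rewrite tnth_mktuple.
case: ifP => diag_k; last by rewrite meval0.
rewrite mevalXU tnth_mktuple enum_rankK mevalXU mulr1n.
congr v; rewrite -[RHS]enum_valK; congr enum_rank; apply: val_inj => /=.
by move: diag_k; rewrite /on_diag; case: (enum_val k) => -[[a i] j] ? /= /eqP->.
Qed.

Lemma in_diag_subalg_of_eval_diag_part (f : polyB Q1 n) :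
  (forall A, (forall a, upper_tri (A a)) ->
     eval_at f A = eval_at f (fun a => diag_part (A a))) ->
  in_diag_subalg f.
Proof.
move=> f_diag; exists (comp_mpoly diag_proj f).
apply/eqP; rewrite -subr_eq0; apply/eqP/mpoly_eq0_of_meval0 => v.
rewrite mevalB meval_diag_vars_proj; apply/eqP; rewrite subr_eq0; apply/eqP.
have := f_diag _ (mx_of_coords_upper v); rewrite /eval_at.
rewrite (meval_eq _ (coords_mx_of_coords v)) => ->; apply: meval_eq => k.
by rewrite coords_diag_part coords_mx_of_coords.
Qed.

Lemma U_invariant_comp_diag_vars (r : nat) (t h : Q1 -> 'I_r) g :
  U_invariant t h (comp_mpoly (diag_vars Q1 n) g).
Proof.
move=> u uu A uA; rewrite /eval_at !comp_mpoly_meval; apply: meval_eq => k.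
rewrite tnth_mktuple !mevalXU /coords enum_rankK /=.
set a := (enum_val k).1; set i := (enum_val k).2.
have [uh dh] := unipotent_invmx (uu (h a)).
have [ut dt] := unipotent_invmx (unipotent_invmx (uu (t a))).
rewrite /uact (upper_tri_mul_diag _ (upper_tri_mul uh (uA a)) ut).
by rewrite (upper_tri_mul_diag _ uh (uA a)) dh dt mul1r mulr1.
Qed.

End DiagonalSubalgebra.

Lemma dynkin_adj_neq X r (i j : 'I_r) :
  dynkin_rank_ok X r -> dynkin_adj X i j -> i != j :> nat.
Proof.
case: X; rewrite /dynkin_rank_ok /dynkin_adj /path_edge /single_edge ?inE;
move: (nat_of_ord i) (nat_of_ord j) => ??; lia.
Qed.

(* In the standard labelling every vertex but [0] has a unique neighbour of
   smaller label. *)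
Lemma dynkin_adj_min_of_max X r (i j i' j' : 'I_r) :
  dynkin_rank_ok X r -> dynkin_adj X i j -> dynkin_adj X i' j' ->
  maxn i j = maxn i' j' -> minn i j = minn i' j'.
Proof.
case: X; rewrite /dynkin_rank_ok /dynkin_adj /path_edge /single_edge ?inE;
move: (nat_of_ord i) (nat_of_ord j) (nat_of_ord i') (nat_of_ord j') => ????; lia.
Qed.

Lemma underlying_dynkin_forest r (Q1 : finType) (t h : Q1 -> 'I_r) X :
  underlying_dynkin t h X ->
  exists lab : 'I_r -> nat,
    (forall a, lab (t a) != lab (h a)) /\ injective (arrow_top t h lab).
Proof.
case=> okX [sigma [adj arrow_inj _]]; exists (fun x => nat_of_ord (sigma x)).
split=> [a|a b top_ab]; first exact: dynkin_adj_neq okX (adj a).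
have bot_ab := dynkin_adj_min_of_max okX (adj a) (adj b) top_ab.
have lab_inj x y : sigma x = sigma y :> nat -> x = y by move/val_inj/perm_inj.
apply: arrow_inj; rewrite /arrow_top in top_ab.
have : (sigma (t a) = sigma (t b) :> nat /\ sigma (h a) = sigma (h b) :> nat) \/
       (sigma (t a) = sigma (h b) :> nat /\ sigma (h a) = sigma (t b) :> nat) by lia.
by case=> -[/lab_inj-> /lab_inj->]; rewrite !eqxx ?orbT.
Qed.

Lemma U_invariant_eval_diag_part n r (Q1 : finType) (t h : Q1 -> 'I_r)
    (lab : 'I_r -> nat) (f : polyB Q1 n) :
  (forall a, lab (t a) != lab (h a)) -> injective (arrow_top t h lab) ->
  U_invariant t h f ->
  forall A, (forall a, upper_tri (A a)) ->
    eval_at f A = eval_at f (fun a => diag_part (A a)).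
Proof.
move=> neq_lab inj_top f_inv; apply: eval_at_diag_part_of_generic => A uA dA.
have [u [uu act_u]] := unipotent_diagonalization neq_lab inj_top uA dA.
rewrite -(f_inv u uu A uA) /eval_at; apply: meval_eq => k.
by rewrite /coords act_u.
Qed.

Theorem mainTheorem1 (n r : nat) (Q1 : finType) (t h : Q1 -> 'I_r)
    (X : dynkin_type) :
  (1 <= n)%N ->
  underlying_dynkin t h X ->
  forall f : polyB Q1 n, U_invariant t h f <-> in_diag_subalg f.
Proof.
move=> _ dynQ f; split; last by case=> g ->; apply: U_invariant_comp_diag_vars.
have [lab [neq_lab inj_top]] := underlying_dynkin_forest dynQ.
move=> f_inv; apply: in_diag_subalg_of_eval_diag_part.
exact: U_invariant_eval_diag_part neq_lab inj_top f_inv.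
Qed.
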